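(* Let $G=(P,E)$ be a finite, connected, undirected, simple graph on the vertex set $P=\{1,\dots,n\}$ with $n\ge 2$, and let $W$ be a finite totally ordered set of $p$ words. Consider the automata network with confusion parameter $\epsilon=0$ described in the context, started from any initial configuration of the form $(M_u,x_u)=(\{x_u\},x_u)$ with $x_u\in W$ for every $u\in P$, and run under the fully-asynchronous updating scheme. Then the expected number of time steps until the system reaches a fixed point is $\mathcal{O}(n^2p\log n)$. That is, there is an absolute constant $C$ such that for every such $G$, $W$ and initial configuration, this expected number is at most $Cn^2p\log n$.
   Context: Model. Each vertex $u\in P$ (an individual) has a state $(M_u,x_u)$, where the memory $M_u$ is a subset of $W$ and $x_u\in M_u$ is the word $u$ conveys to its neighbours. The neighbourhood of $u$ is $V_u=\{v\in P:(u,v)\in E\}$. The total order on $W$ is written $\prec$, and $\min$ refers to it. Local rule of $u$ for confusion parameter $\epsilon=0$. When $u$ is updated, it first forms $N_u=\{x_v : v\in V_u,\ x_v\notin M_u\}$ and $B_u=\{x_v : v\in V_u,\ x_v\in M_u\}$. If $N_u\neq\emptyset$, the memory becomes $M_u\cup N_u$ and $x_u$ is unchanged (addition). Otherwise the state becomes $(\{\min B_u\},\min B_u)$ (collapse). All other vertices keep their states. Updating schemes. One vertex is updated per time step. Under the sequential scheme, a fixed permutation $\sigma$ of $P$ is chosen and vertices are updated cyclically in the order $\sigma(1),\dots,\sigma(n),\sigma(1),\dots$, with each update using the current states. Under the fully-asynchronous scheme, at each time step one vertex is chosen uniformly at random from $P$, independently of all other steps. A fixed point is a configuration that is left unchanged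 by the local rule of every vertex. *)

From mathcomp Require Import all_boot.
Set Implicit Arguments. Unset Strict Implicit. Unset Printing Implicit Defensive.

(* Vertices P = 'I_n, words W = 'I_p (any finite total order of size p is
   isomorphic to 'I_p with its natural order). A configuration assigns to
   each vertex u a pair (M_u, x_u). *)
Definition state (p : nat) := ({set 'I_p} * 'I_p)%type.
Definition config (n p : nat) := {ffun 'I_n -> state p}.

Definition simple_graph n (e : rel 'I_n) : Prop :=
  irreflexive e /\ symmetric e.
Definition connected_graph n (e : rel 'I_n) : Prop :=
  forall u v, connect e u v.

Definition wmin p (B : {set 'I_p}) : option 'I_p :=
  [pick w in B | [forall w' in B, (w <= w')%N]].

Definition local_rule n p (e : rel 'I_n) (c : config n p) (u : 'I_n) : state p :=
  let Mu := (c u).1 in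
  let words := [set (c v).2 | v in [set v | e u v]] in
  let Nu := words :\: Mu in
  let Bu := words :&: Mu in
  if Nu != set0 then (Mu :|: Nu, (c u).2)
  else match wmin Bu with
       | Some w => ([set w], w)
       | None => c u   (* unreachable when u has a neighbour *)
       end.

Definition update n p (e : rel 'I_n) (c : config n p) (u : 'I_n) : config n p :=
  [ffun v => if v == u then local_rule e c u else c v].

Definition is_fixed n p (e : rel 'I_n) (c : config n p) : bool :=
  [forall u, update e c u == c].

Definition run n p (e : rel 'I_n) (c : config n p) (s : seq 'I_n) : config n p :=
  foldl (update e) c s.

Definition init_config n p (x0 : 'I_n -> 'I_p) : config n p :=
  [ffun u => ([set x0 u], x0 u)].

(* number of sequences of t uniformly chosen vertices along which no fixed
   point is reached at times 0..t, i.e. n^t * P(T > t) for the hitting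
   time T of the set of fixed points under the fully-asynchronous scheme *)
Definition not_yet_fixed_count n p (e : rel 'I_n) (c : config n p) (t : nat) : nat :=
  #|[set s : t.-tuple 'I_n |
       [forall k : 'I_t.+1, ~~ is_fixed e (run e c (take k s))]]|.

From mathcomp Require Import all_boot all_order all_algebra.
From Stdlib Require Import Reals.
From mathcomp Require Import Rstruct zify ring lra.

Set Implicit Arguments. Unset Strict Implicit. Unset Printing Implicit Defensive.
Import Order.TTheory GRing.Theory Num.Theory.

(* A drift argument. Call a configuration coherent when every vertex remembers
   the word it speaks; this holds initially and is preserved. On coherent
   configurations we build a potential that is non-negative, at most
   n^2 (p + 2) + n^2 H_n p, and drops by at least 1 in expectation at every step
   from a non-fixed configuration, so the expected hitting time of the fixed
   points is at most the initial potential; finally H_n <= 1 + ln n.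
   The potential follows three phases, driven by the smallest spoken word w,
   which never decreases (and a spoken word disappears whenever it grows).
   (1) While no edge joins two speakers of w, it charges n^2 H_n per spoken word
   beyond the first, plus n times a sum of harmonic numbers of the sizes of the
   sets of w-speakers that have not heard at least l spoken words: updating one
   of the w-speakers that heard the fewest words either teaches it a word or
   makes it stop speaking w. (2) Once such an edge exists, the w-speakers with a
   w-speaking neighbour form a growing set; every other vertex costs one plus
   the number of spoken words it has not heard if it is adjacent to that set,
   p + 1 otherwise, and updating an adjacent vertex lowers its cost. (3) Once
   everybody speaks w, the potential is n times the number of vertices whose
   memory is not a singleton. *)

Section Harmonic.
Variable R : realFieldType.
Local Open Scope ring_scope.

Definition harmonic (k : nat) : R := \sum_(i < k) (i.+1)%:R^-1.

Lemma harmonicS k : harmonic k.+1 = harmonic k + (k.+1)%:R^-1.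
Proof. by rewrite /harmonic big_ord_recr. Qed.

Lemma harmonic_ge0 k : 0 <= harmonic k.
Proof. by apply: sumr_ge0 => i _; rewrite invr_ge0 ler0n. Qed.

Lemma le_harmonic (a b : nat) : (a <= b)%nat -> harmonic a <= harmonic b.
Proof.
move=> /subnK <-; elim: (b - a)%nat => [|k IHk]; first by rewrite add0n.
by rewrite addSn harmonicS (le_trans IHk) // lerDl invr_ge0 ler0n.
Qed.

Lemma harmonic_add_inv_le (a b : nat) : (a < b)%nat -> harmonic a + b%:R^-1 <= harmonic b.
Proof. by case: b => // b ltab; rewrite harmonicS lerD2r le_harmonic. Qed.

Lemma inv_le_harmonic (k : nat) : (0 < k)%nat -> k%:R^-1 <= harmonic k.
Proof. by move/harmonic_add_inv_le; rewrite /harmonic big_ord0 add0r. Qed.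

End Harmonic.

Lemma card_tuple_cons (T : finType) t (P : pred (t.+1.-tuple T)) :
  #|[set s | P s]| = \sum_(u : T) #|[set s : t.-tuple T | P [tuple of u :: s]]|.
Proof.
rewrite -sum1dep_card.
rewrite (eq_bigr (fun u : T => \sum_(s : t.-tuple T | P [tuple of u :: s]) 1)%nat); last first.
  by move=> u _; rewrite sum1dep_card.
rewrite pair_big_dep /= (reindex (fun q : T * t.-tuple T => [tuple of q.1 :: q.2])) //=.
exists (fun s => (thead s, behead_tuple s)) => [[u s] _ | s _].
  by congr pair; apply: val_inj.
by apply: val_inj; case: s => -[].
Qed.

Section HittingCount.
Variables (n p : nat) (e : rel 'I_n).

Lemma not_yet_fixed_count0 (c : config n p) :
  not_yet_fixed_count e c 0 = ~~ is_fixed e c.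
Proof.
rewrite /not_yet_fixed_count (eq_finset (fun s => ~~ is_fixed e c)).
  by case: (is_fixed e c); rewrite cardsE ?card0 // card_tuple.
by move=> s; apply/forallP/idP => [/(_ ord0) | nf k]; rewrite ord1 take0.
Qed.

Lemma not_yet_fixed_countS (c : config n p) t :
  not_yet_fixed_count e c t.+1 =
  ~~ is_fixed e c * \sum_(u < n) not_yet_fixed_count e (update e c u) t.
Proof.
rewrite /not_yet_fixed_count card_tuple_cons big_distrr /=; apply: eq_bigr => u _.
case fixed_c: (is_fixed e c) => /=.
  rewrite mul0n; apply/eqP; rewrite cards_eq0; apply/eqP/setP => s; rewrite !inE.
  by apply/negbTE/forallPn; exists ord0; rewrite /= fixed_c.
rewrite mul1n; apply: eq_card => s; rewrite !inE.
apply/forallP/forallP => [run_nf k | run_nf [[|k] lt_k]]; first exact: (run_nf (lift ord0 k)).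
  by rewrite /= fixed_c.
exact: (run_nf (Ordinal (lt_k : k < t.+1)%nat)).
Qed.

Lemma not_yet_fixed_count_fixed (c : config n p) t :
  is_fixed e c -> not_yet_fixed_count e c t = 0%nat.
Proof.
by case: t => [|t] fixed_c; rewrite ?not_yet_fixed_count0 ?not_yet_fixed_countS fixed_c.
Qed.

End HittingCount.

Section Drift.
Local Open Scope ring_scope.
Variables (R : realFieldType) (n p : nat) (e : rel 'I_n).
Variables (inv : config n p -> Prop) (Phi : config n p -> R).
Hypotheses (n_gt0 : (0 < n)%nat)
  (inv_update : forall c u, inv c -> inv (update e c u))
  (Phi_ge0 : forall c, inv c -> 0 <= Phi c)
  (Phi_drift : forall c, inv c -> ~~ is_fixed e c ->
     \sum_(u < n) Phi (update e c u) <= n%:R * (Phi c - 1)).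

Lemma not_yet_fixed_series_le N c : inv c ->
  \sum_(t < N) (not_yet_fixed_count e c t)%:R / n%:R ^+ t <= Phi c.
Proof.
elim: N c => [|N IHN] c inv_c; first by rewrite big_ord0 Phi_ge0.
rewrite big_ord_recl not_yet_fixed_count0 expr0 divr1.
have [fixed_c | nfixed_c] := boolP (is_fixed e c).
  rewrite big1 ?addr0 ?Phi_ge0 // => t _.
  by rewrite not_yet_fixed_count_fixed // mul0r.
have n_pos : 0 < n%:R :> R by rewrite ltr0n.
have step t : (not_yet_fixed_count e c t.+1)%:R / n%:R ^+ t.+1 =
    n%:R^-1 * \sum_(u < n) (not_yet_fixed_count e (update e c u) t)%:R / n%:R ^+ t :> R.
  by rewrite not_yet_fixed_countS nfixed_c mul1n natr_sum exprS invfM -mulr_suml mulrCA.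
under eq_bigr do rewrite /bump /= step.
rewrite -big_distrr exchange_big /=.
have : n%:R^-1 * \sum_(u < n) \sum_(t < N)
    (not_yet_fixed_count e (update e c u) t)%:R / n%:R ^+ t <= Phi c - 1.
  rewrite ler_pdivrMl // (le_trans _ (Phi_drift inv_c nfixed_c)) //.
  by apply: ler_sum => u _; apply: IHN; apply: inv_update.
by rewrite lerBrDl.
Qed.

End Drift.

Lemma connect_crossing_edge (T : finType) (e : rel T) (S : {set T}) s v :
  connect e s v -> s \in S -> v \notin S -> exists a b, [/\ a \in S, b \notin S & e a b].
Proof.
case/connectP => q; elim: q s => [|z q IHq] s /=; first by move=> _ -> ->.
case/andP => e_sz path_zq v_q s_S v_S.
have [z_S | z_S] := boolP (z \in S); first exact: IHq path_zq v_q z_S v_S.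
by exists s, z.
Qed.

Lemma wminP p (B : {set 'I_p}) w0 : w0 \in B ->
  exists m, [/\ wmin B = Some m, m \in B & forall w, w \in B -> m <= w].
Proof.
move=> w0_B; rewrite /wmin; case: pickP => [m /andP [m_B /forallP m_min] | no_min].
  by exists m; split=> // w w_B; have := m_min w; rewrite w_B.
have [m m_B m_min] := arg_minnP (fun w : 'I_p => val w) w0_B.
have := no_min m; rewrite /= (m_B : m \in B) => /negbT/negP; elim.
by apply/forall_inP => w /m_min.
Qed.

Section Model.
Variables (n p : nat) (e : rel 'I_n).
Hypotheses (n_gt1 : 1 < n) (e_simple : simple_graph e) (e_connected : connected_graph e).
Implicit Types (c : config n p) (u v w : 'I_n).
Local Notation v0 := (Ordinal (ltnW n_gt1)).

Definition word c v : 'I_p := (c v).2.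
Definition memory c v : {set 'I_p} := (c v).1.
Definition neighbour_words c u := [set word c w | w in [set w | e u w]].
Definition used_words c := [set word c v | v : 'I_n].
Definition coherent c := forall v, word c v \in memory c v.

Lemma edge_sym u v : e u v = e v u.
Proof. by case: e_simple => _; apply. Qed.

Lemma edge_irrefl u : e u u = false.
Proof. by case: e_simple => + _; apply. Qed.

Lemma exists_neighbour u : exists w, e u w.
Proof.
pose v : 'I_n := if val u == 0 then Ordinal n_gt1 else v0.
have v_u : v \notin [set u].
  rewrite in_set1 -val_eqE /v; case: (val u =P 0) => [-> | /eqP u_neq0] //=.
  by rewrite eq_sym.
have [a [b [/set1P -> _ e_ub]]] := connect_crossing_edge (e_connected u v) (set11 u) v_u.
by exists b.
Qed.

Lemma update_self c u : update e c u u = local_rule e c u.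
Proof. by rewrite ffunE eqxx. Qed.

Lemma update_other c u v : v != u -> update e c u v = c v.
Proof. by rewrite ffunE => /negbTE ->. Qed.

Lemma word_update_other c u v : v != u -> word (update e c u) v = word c v.
Proof. by move=> /update_other; rewrite /word => ->. Qed.

Lemma memory_update_other c u v : v != u -> memory (update e c u) v = memory c v.
Proof. by move=> /update_other; rewrite /memory => ->. Qed.

Variant local_rule_spec c u : state p -> Prop :=
| LocalAdd of neighbour_words c u :\: memory c u != set0 :
    local_rule_spec c u (memory c u :|: (neighbour_words c u :\: memory c u), word c u)
| LocalCollapse w of e u w & (forall w', e u w' -> word c w <= word c w')
    & neighbour_words c u \subset memory c u :
    local_rule_spec c u ([set word c w], word c w).

Lemma local_ruleP c u : local_rule_spec c u (local_rule e c u).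
Proof.
rewrite /local_rule -/(neighbour_words c u) -/(memory c u) -/(word c u).
case: ifPn => [new_words | /negPn]; first exact: LocalAdd.
rewrite setD_eq0 => nbr_mem; rewrite (setIidPl nbr_mem).
have [w e_uw] := exists_neighbour u.
have w_nbr : w \in [set w | e u w] by rewrite inE.
have [m [-> /imsetP [w' e_uw' ->] m_min]] := wminP (imset_f (word c) w_nbr).
apply: LocalCollapse => //; first by rewrite inE in e_uw'.
by move=> w'' e_uw''; apply: m_min; apply: imset_f; rewrite inE.
Qed.

Lemma coherent_update c u : coherent c -> coherent (update e c u).
Proof.
move=> coh v; have [-> | v_u] := eqVneq v u; last first.
  by rewrite word_update_other // memory_update_other.
rewrite /word /memory update_self.
by case: local_ruleP => [_ | w _ _ _] /=; rewrite !inE ?coh ?eqxx.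
Qed.

Lemma word_used c v : word c v \in used_words c.
Proof. exact: imset_f. Qed.

Lemma used_words_update c u : used_words (update e c u) \subset used_words c.
Proof.
apply/subsetP => _ /imsetP [v _ ->]; have [-> | v_u] := eqVneq v u.
  by rewrite /word update_self; case: local_ruleP => [_ | w _ _ _]; apply: word_used.
by rewrite word_update_other ?word_used.
Qed.

Lemma card_used_words_gt0 c : 0 < #|used_words c|.
Proof. by apply/card_gt0P; exists (word c v0); apply: word_used. Qed.

Definition min_word c : 'I_p := word c [arg min_(v < v0) (word c v : nat)].

Lemma min_word_le c v : min_word c <= word c v.
Proof. by rewrite /min_word; case: arg_minnP => // m _; apply. Qed.

Lemma min_word_le_used c x : x \in used_words c -> min_word c <= x.
Proof. by case/imsetP => v _ ->; apply: min_word_le. Qed.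

Lemma min_word_used c : min_word c \in used_words c.
Proof. exact: word_used. Qed.

Lemma min_word_update c u : min_word c <= min_word (update e c u).
Proof. exact/min_word_le_used/(subsetP (used_words_update c u))/min_word_used. Qed.

Lemma min_word_ext c c' : word c' =1 word c -> min_word c' = min_word c.
Proof.
move=> same; have used_eq : used_words c' = used_words c by apply: eq_imset.
apply/ord_inj/anti_leq; rewrite !min_word_le_used //; first by rewrite -used_eq min_word_used.
by rewrite used_eq min_word_used.
Qed.

Definition minimal c v := word c v == min_word c.

Lemma exists_minimal c : exists v, minimal c v.
Proof. by exists [arg min_(v < v0) (word c v : nat)]; rewrite /minimal. Qed.

Definition consensus c := [forall v, minimal c v].

Lemma consensus_word c v w : consensus c -> word c v = word c w.
Proof. by move=> /forallP all_min; rewrite (eqP (all_min v)) (eqP (all_min w)). Qed.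

Lemma consensus_local_rule c u : coherent c -> consensus c ->
  local_rule e c u = ([set word c u], word c u).
Proof.
move=> coh /consensus_word same; case: local_ruleP => [| w _ _ _]; last by rewrite (same w u).
by case/set0Pn => _ /setDP [/imsetP [w _ ->]]; rewrite (same w u) coh.
Qed.

Lemma consensus_word_update c u v : coherent c -> consensus c ->
  word (update e c u) v = word c v.
Proof.
move=> coh cons; have [-> | v_u] := eqVneq v u; last exact: word_update_other.
by rewrite /word update_self consensus_local_rule.
Qed.

Lemma consensus_update c u : coherent c -> consensus c -> consensus (update e c u).
Proof.
move=> coh cons; have same v := consensus_word_update u v coh cons.
apply/forallP => v; rewrite /minimal (min_word_ext same) same; exact: (forallP cons v).
Qed.

Definition dirty c := [set v | 1 < #|memory c v|].

Lemma dirty_update c u : coherent c -> consensus c -> dirty (update e c u) = dirty c :\ u.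
Proof.
move=> coh cons; apply/setP => v; rewrite !inE; have [-> | v_u] := eqVneq v u.
  by rewrite /memory update_self consensus_local_rule //= cards1.
by rewrite memory_update_other.
Qed.

Lemma consensus_fixed c : coherent c -> consensus c -> dirty c = set0 -> is_fixed e c.
Proof.
move=> coh cons clean; apply/forallP => u; apply/eqP/ffunP => v.
have [-> | v_u] := eqVneq v u; last exact: update_other.
have : u \notin dirty c by rewrite clean inE.
rewrite update_self consensus_local_rule // inE -leqNgt => card_le1.
have /eqP -> : [set word c u] == memory c u by rewrite eqEcard sub1set coh cards1.
by rewrite /memory /word; case: (c u).
Qed.

Definition unseen c v := #|used_words c :\: memory c v|.

Lemma unseen_lt c v : coherent c -> unseen c v < #|used_words c|.
Proof.
move=> coh; apply/proper_card/properP; split; first exact: subsetDl.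
by exists (word c v); rewrite ?word_used // inE coh.
Qed.

Lemma unseen_update_other c u v : v != u -> unseen (update e c u) v <= unseen c v.
Proof.
move=> v_u; rewrite /unseen memory_update_other //.
exact/subset_leq_card/setSD/used_words_update.
Qed.

Lemma unseen_update_add c u : neighbour_words c u :\: memory c u != set0 ->
  unseen (update e c u) u < unseen c u.
Proof.
move=> new; rewrite /unseen [memory (update e c u) u]/memory update_self.
case: local_ruleP => [_ | w _ _ nbr_mem]; last by move: nbr_mem; rewrite -setD_eq0 (negbTE new).
case/set0Pn: new => x x_new /=; have x_unseen : x \in used_words c :\: memory c u.
  by move: x_new; rewrite !inE => /andP [-> /imsetP [w _ ->]]; rewrite word_used.
rewrite (cardsD1 x (_ :\: memory c u)) x_unseen ltnS.
apply/subset_leq_card/subsetP => y; rewrite !inE negb_or => /andP [/andP [y_old y_new]] y_used.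
rewrite y_old (subsetP (used_words_update c u) _ y_used) !andbT.
by apply/eqP => y_x; move: y_new; rewrite y_x -in_setD x_new.
Qed.

Lemma min_neighbour_word c u w z : (forall w', e u w' -> word c w <= word c w') ->
  e u z -> minimal c z -> word c w = min_word c.
Proof.
move=> w_min e_uz /eqP z_min; apply/ord_inj/anti_leq.
by rewrite min_word_le -z_min w_min.
Qed.

Definition settled c := [set v | minimal c v && [exists w, e v w && minimal c w]].

Lemma consensus_settled c : consensus c -> settled c != set0.
Proof.
move=> /forallP all_min; have [v _] := exists_minimal c; have [w e_vw] := exists_neighbour v.
by apply/set0Pn; exists v; rewrite inE all_min; apply/existsP; exists w; rewrite e_vw all_min.
Qed.

Lemma settled_minimal c v : v \in settled c -> minimal c v.
Proof. by rewrite inE => /andP []. Qed.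

Lemma settled_neighbour c v w : v \in settled c -> e v w -> minimal c w -> w \in settled c.
Proof.
rewrite inE => /andP [v_min _] e_vw w_min; rewrite inE w_min.
by apply/existsP; exists v; rewrite edge_sym e_vw.
Qed.

Lemma word_update_settled c u v : v \in settled c -> word (update e c u) v = word c v.
Proof.
have [-> | v_u] := eqVneq v u; last by move=> _; apply: word_update_other.
rewrite inE /word update_self => /andP [/eqP u_min /existsP [z /andP [e_uz z_min]]].
case: local_ruleP => [_ | w _ w_min _] //=.
by rewrite (min_neighbour_word w_min e_uz z_min).
Qed.

Lemma min_word_update_settled c u v : v \in settled c ->
  min_word (update e c u) = min_word c.
Proof.
move=> v_settled; apply/ord_inj/anti_leq; rewrite min_word_update andbT.
rewrite (leq_trans (min_word_le _ v)) // word_update_settled //.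
by rewrite (eqP (settled_minimal v_settled)).
Qed.

Lemma minimal_update_settled c u v : v \in settled c -> minimal (update e c u) v.
Proof.
move=> v_settled; rewrite /minimal (min_word_update_settled u v_settled).
by rewrite word_update_settled //; apply: settled_minimal.
Qed.

Lemma settled_update c u : settled c \subset settled (update e c u).
Proof.
apply/subsetP => v v_settled; move: (v_settled).
rewrite inE => /andP [_ /existsP [z /andP [e_vz z_min]]].
rewrite inE minimal_update_settled //; apply/existsP; exists z.
by rewrite e_vz minimal_update_settled // (settled_neighbour v_settled).
Qed.

Definition touches_settled c v := [exists w, e v w && (w \in settled c)].
Definition frontier c := [set v | (v \notin settled c) && touches_settled c v].

Lemma touches_settled_update c u v :
  touches_settled c v -> touches_settled (update e c u) v.
Proof.
case/existsP => w /andP [e_vw w_settled]; apply/existsP; exists w.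
by rewrite e_vw (subsetP (settled_update c u)).
Qed.

Lemma frontier_neq0 c : settled c != set0 -> ~~ consensus c -> frontier c != set0.
Proof.
case/set0Pn => s s_settled /forallPn [v v_nmin].
have v_out : v \notin settled c by apply: contra v_nmin; apply: settled_minimal.
have [a [b [a_in b_out e_ab]]] := connect_crossing_edge (e_connected s v) s_settled v_out.
by apply/set0Pn; exists b; rewrite inE b_out; apply/existsP; exists a; rewrite edge_sym e_ab.
Qed.

Lemma frontier_settles_or_learns c u : u \in frontier c ->
  u \in settled (update e c u) \/ unseen (update e c u) u < unseen c u.
Proof.
rewrite inE => /andP [_ /existsP [z /andP [e_uz z_settled]]].
have := update_self c u; case: local_ruleP => [new _ | w _ w_min _ upd_u].
  by right; apply: unseen_update_add.
left; apply: (settled_neighbour (subsetP (settled_update c u) _ z_settled)).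
  by rewrite edge_sym.
rewrite /minimal /word upd_u /= (min_word_update_settled u z_settled).
by rewrite (min_neighbour_word w_min e_uz (settled_minimal z_settled)).
Qed.

Definition spread_cost c v :=
  if v \in settled c then 0 else if touches_settled c v then (unseen c v).+1 else p.+1.

Definition spread_potential c := \sum_v spread_cost c v.

Lemma spread_cost_le c v : spread_cost c v <= p.+1.
Proof.
rewrite /spread_cost; case: ifP => // _; case: ifP => // _.
by rewrite ltnS /unseen (leq_trans (max_card _)) ?card_ord.
Qed.

Lemma spread_cost_le_touching c v :
  touches_settled c v -> spread_cost c v <= (unseen c v).+1.
Proof. by rewrite /spread_cost => ->; case: ifP. Qed.

Lemma spread_cost_update_frontier c u : u \in frontier c ->
  spread_cost (update e c u) u < spread_cost c u.
Proof.
move=> u_front; have := u_front; rewrite inE => /andP [u_out touch].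
rewrite {2}/spread_cost (negbTE u_out) touch.
case: (frontier_settles_or_learns u_front) => [u_settled | lt_unseen].
  by rewrite /spread_cost u_settled.
by apply: leq_ltn_trans (spread_cost_le_touching (touches_settled_update u touch)) _.
Qed.

Lemma spread_cost_update c u v : spread_cost (update e c u) v <= spread_cost c v.
Proof.
have [v_settled | v_out] := boolP (v \in settled c).
  by rewrite /spread_cost (subsetP (settled_update c u) _ v_settled) v_settled.
have [touch | no_touch] := boolP (touches_settled c v); last first.
  by rewrite {2}/spread_cost (negbTE v_out) (negbTE no_touch) spread_cost_le.
have [<- | v_u] := eqVneq v u.
  by apply/ltnW/spread_cost_update_frontier; rewrite inE v_out touch.
rewrite {2}/spread_cost (negbTE v_out) touch.
apply: leq_trans (spread_cost_le_touching (touches_settled_update u touch)) _.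
by rewrite ltnS unseen_update_other.
Qed.

Lemma spread_potential_update c u :
  spread_potential (update e c u) + (u \in frontier c) <= spread_potential c.
Proof.
rewrite /spread_potential (bigD1 u) // [X in _ <= X](bigD1 u) //= addnAC.
apply: leq_add; last by apply: leq_sum => v _; apply: spread_cost_update.
case: (boolP (u \in frontier c)) => [/spread_cost_update_frontier | _]; first by rewrite addn1.
by rewrite addn0 spread_cost_update.
Qed.

Lemma spread_potential_le c : spread_potential c <= n * p.+1.
Proof.
rewrite -[n in n * _]card_ord -sum_nat_const.
by apply: leq_sum => v _; apply: spread_cost_le.
Qed.

Lemma card_used_words_le c : #|used_words c| <= n.
Proof. by rewrite (leq_trans (leq_imset_card _ _)) ?card_ord. Qed.

Lemma card_used_words_update c u : min_word (update e c u) != min_word c ->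
  #|used_words (update e c u)| < #|used_words c|.
Proof.
move=> min_moved; apply/proper_card/properP; split; first exact: used_words_update.
exists (min_word c); first exact: min_word_used.
apply: contra min_moved => /min_word_le_used min_le; apply/eqP/ord_inj/anti_leq.
by rewrite min_le (min_word_update c u).
Qed.

Definition high c l := [set v | minimal c v & l <= unseen c v].
Definition top_unseen c := \max_(v | minimal c v) unseen c v.
Definition peak c := high c (top_unseen c).

Lemma top_unseen_attained c : exists2 w, minimal c w & top_unseen c = unseen c w.
Proof.
have [v v_min] := exists_minimal c.
have [|w w_min top_eq] := @eq_bigmax_cond _ (minimal c) (unseen c); last by exists w.
by apply/card_gt0P; exists v.
Qed.

Lemma peak_neq0 c : peak c != set0.
Proof.
have [w w_min top_eq] := top_unseen_attained c.
by apply/set0Pn; exists w; rewrite inE w_min top_eq leqnn.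
Qed.

Lemma top_unseen_lt c : coherent c -> top_unseen c < n.
Proof.
move=> coh; apply: leq_trans (card_used_words_le c).
by have [w _ ->] := top_unseen_attained c; apply: unseen_lt.
Qed.

Lemma unseen_le_top c v : minimal c v -> unseen c v <= top_unseen c.
Proof. exact: leq_bigmax_cond. Qed.

Section UnsettledStep.
Variables (c : config n p) (u : 'I_n).
Local Notation c' := (update e c u).
Hypotheses (unsettled' : settled c' = set0) (same_min : min_word c' = min_word c).

Lemma minimal_update_unsettled v : minimal c' v ->
  minimal c v /\ unseen c' v + (v == u) <= unseen c v.
Proof.
have [-> | v_u] := eqVneq v u; last first.
  rewrite /minimal same_min word_update_other // addn0 => ->.
  by split=> //; apply: unseen_update_other.
rewrite addn1 /minimal same_min.
have := update_self c u; case: local_ruleP => [new | w e_uw _ _] upd_u.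
  by rewrite /word upd_u; split=> //; apply: unseen_update_add.
move=> u_min; have : u \in settled c'.
  rewrite inE /minimal same_min u_min; apply/existsP; exists w.
  have w_u : w != u by apply: contraTneq e_uw => ->; rewrite edge_irrefl.
  by rewrite e_uw word_update_other // -(eqP u_min) /word upd_u /=.
by rewrite unsettled' inE.
Qed.

Lemma high_update l : high c' l \subset high c l.
Proof.
apply/subsetP => v; rewrite !inE => /andP [v_min le_l].
have [-> le_unseen] := minimal_update_unsettled v_min.
by rewrite (leq_trans le_l) // (leq_trans _ le_unseen) ?leq_addr.
Qed.

Lemma high_update_peak : u \in peak c -> high c' (top_unseen c) \subset peak c :\ u.
Proof.
rewrite inE => /andP [u_min _]; apply/subsetP => v v_high.
rewrite in_setD1 (subsetP (high_update _)) // andbT.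
apply: contraTneq v_high => ->; rewrite inE negb_and -ltnNge.
have [u_min' | //] := boolP (minimal c' u).
have [_] := minimal_update_unsettled u_min'; rewrite eqxx addn1 => lt_unseen.
by rewrite (leq_trans lt_unseen) ?unseen_le_top ?orbT.
Qed.
End UnsettledStep.

Section Potential.
Variable R : realFieldType.
Local Open Scope ring_scope.

Definition harmonic_potential c : R := \sum_(l < n) harmonic R #|high c l|.

Lemma harmonic_potential_ge0 c : 0 <= harmonic_potential c.
Proof. by apply: sumr_ge0 => l _; apply: harmonic_ge0. Qed.

Lemma harmonic_potential_le c : harmonic_potential c <= n%:R * harmonic R n.
Proof.
have le_l (l : 'I_n) : harmonic R #|high c l| <= harmonic R n.
  by apply: le_harmonic; rewrite -[n in (_ <= n)%nat]card_ord max_card.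
by rewrite (le_trans (ler_sum _ (fun l _ => le_l l))) // sumr_const card_ord mulr_natl.
Qed.

Lemma inv_peak_le_harmonic_potential c : coherent c ->
  #|peak c|%:R^-1 <= harmonic_potential c.
Proof.
move=> coh; rewrite /harmonic_potential (bigD1 (Ordinal (top_unseen_lt coh))) //=.
rewrite -[X in X <= _]addr0 lerD ?sumr_ge0 // => [|l _]; last exact: harmonic_ge0.
by apply: inv_le_harmonic; rewrite card_gt0 peak_neq0.
Qed.

Lemma harmonic_potential_update c u : coherent c ->
  settled (update e c u) = set0 -> min_word (update e c u) = min_word c ->
  harmonic_potential (update e c u) <=
  harmonic_potential c - (if u \in peak c then #|peak c|%:R^-1 else 0).
Proof.
move=> coh unsettled' same_min.
have le_high l : harmonic R #|high (update e c u) l| <= harmonic R #|high c l|.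
  exact/le_harmonic/subset_leq_card/high_update.
case: ifP => [u_peak | _]; last by rewrite subr0; apply: ler_sum => l _; apply: le_high.
set top := Ordinal (top_unseen_lt coh).
rewrite /harmonic_potential (bigD1 top) // [X in _ <= X - _](bigD1 top) //= -/(peak c).
have lt_peak : (#|high (update e c u) (top_unseen c)| < #|peak c|)%nat.
  apply: leq_ltn_trans (subset_leq_card (high_update_peak unsettled' same_min u_peak)) _.
  by rewrite (cardsD1 u (peak c)) u_peak.
have le_rest : \sum_(l < n | l != top) harmonic R #|high (update e c u) l| <=
               \sum_(l < n | l != top) harmonic R #|high c l|.
  by apply: ler_sum => l _; apply: le_high.
have := harmonic_add_inv_le R lt_peak.
by move: (#|peak c|%:R^-1) => x; lra.
Qed.

(* The constants are chosen so that no step of the first phase can increase the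
   potential: [settled_bound] dominates the potential of the later phases, and
   [word_charge] dominates [n%:R * harmonic_potential c], so losing a spoken word
   pays for any change of the harmonic part. *)
Definition settled_bound := (n * n * p.+2)%nat.
Definition word_charge : R := n%:R * (n%:R * harmonic R n).

Definition potential c : R :=
  if consensus c then (n * #|dirty c|)%:R
  else if settled c != set0 then (n * (n + spread_potential c))%:R
  else settled_bound%:R + word_charge * (#|used_words c|.-1)%:R + n%:R * harmonic_potential c.

Lemma word_charge_ge0 : 0 <= word_charge.
Proof. by rewrite !mulr_ge0 ?harmonic_ge0. Qed.

Lemma harmonic_potential_le_charge c : n%:R * harmonic_potential c <= word_charge.
Proof. by rewrite ler_wpM2l ?harmonic_potential_le. Qed.

Lemma potential_ge0 c : 0 <= potential c.
Proof.
rewrite /potential; case: ifP => // _; case: ifP => // _.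
by rewrite !addr_ge0 ?mulr_ge0 ?harmonic_ge0 ?harmonic_potential_ge0.
Qed.

Lemma potential_unsettled c : settled c = set0 ->
  potential c =
  settled_bound%:R + word_charge * (#|used_words c|.-1)%:R + n%:R * harmonic_potential c.
Proof.
move=> unsettled_c; have no_cons : consensus c = false.
  by apply/negP => /consensus_settled; rewrite unsettled_c eqxx.
by rewrite /potential no_cons unsettled_c eqxx.
Qed.

Lemma potential_le_settled c : settled c != set0 ->
  potential c <= (n * (n + spread_potential c))%:R.
Proof.
rewrite /potential => ->; case: ifP => // _; rewrite ler_nat leq_mul2l.
by rewrite (leq_trans _ (leq_addr _ _)) ?orbT // -[n in (_ <= n)%nat]card_ord max_card.
Qed.

Lemma potential_le_settled_bound c : settled c != set0 -> potential c <= settled_bound%:R.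
Proof.
move/potential_le_settled/le_trans; apply; rewrite ler_nat /settled_bound -mulnA leq_mul2l.
by rewrite mulnS leq_add2l spread_potential_le orbT.
Qed.

Lemma potential_le c : potential c <= settled_bound%:R + word_charge * p%:R.
Proof.
have [settled_c | /negPn/eqP unsettled_c] := boolP (settled c != set0).
  by rewrite (le_trans (potential_le_settled_bound settled_c)) // lerDl mulr_ge0 ?word_charge_ge0.
rewrite potential_unsettled // -addrA lerD2l.
have used_le : (#|used_words c|.-1)%:R + 1 <= p%:R :> R.
  rewrite natr1 ler_nat prednK ?card_used_words_gt0 //.
  by rewrite -[p in (_ <= p)%nat]card_ord max_card.
apply: le_trans (lerD (lexx _) (harmonic_potential_le_charge c)) _.
by rewrite -[X in _ + X]mulr1 -mulrDr ler_wpM2l ?word_charge_ge0.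
Qed.

Lemma potential_update_consensus c u : coherent c -> consensus c ->
  potential (update e c u) = potential c - (if u \in dirty c then n%:R else 0).
Proof.
move=> coh cons; rewrite /potential consensus_update // cons dirty_update //.
rewrite [in RHS](cardsD1 u (dirty c)); case: (u \in dirty c).
  by rewrite mulnDr muln1 natrD addrC addKr.
by rewrite add0n subr0.
Qed.

Lemma potential_update_settled c u : ~~ consensus c -> settled c != set0 ->
  potential (update e c u) <= potential c - (if u \in frontier c then n%:R else 0).
Proof.
move=> no_cons settled_c.
have settled_c' : settled (update e c u) != set0.
  case/set0Pn: settled_c => v v_settled; apply/set0Pn; exists v.
  exact: (subsetP (settled_update c u)).
rewrite {2}/potential (negbTE no_cons) settled_c.
rewrite (le_trans (potential_le_settled settled_c')) //.
have := spread_potential_update c u.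
case: (u \in frontier c) => sp_le; last by rewrite subr0 ler_nat; nia.
by rewrite lerBrDr -natrD ler_nat; nia.
Qed.

Lemma potential_update_unsettled c u : coherent c -> settled c = set0 ->
  potential (update e c u) <=
  potential c - (if u \in peak c then n%:R / #|peak c|%:R else 0).
Proof.
move=> coh unsettled_c; set c' := update e c u; set drop := (if _ then _ else _).
have drop_le : drop <= n%:R * harmonic_potential c.
  rewrite /drop; case: ifP => _; last by rewrite mulr_ge0 ?harmonic_potential_ge0.
  by rewrite ler_wpM2l ?inv_peak_le_harmonic_potential.
have used_c_ge0 : 0 <= word_charge * (#|used_words c|.-1)%:R.
  by rewrite mulr_ge0 ?word_charge_ge0.
rewrite (potential_unsettled unsettled_c).
have [settled_c' | /negPn/eqP unsettled_c'] := boolP (settled c' != set0).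
  by rewrite (le_trans (potential_le_settled_bound settled_c')) //; lra.
rewrite (potential_unsettled unsettled_c').
have := harmonic_potential_le_charge c'; have := word_charge_ge0.
move: (word_charge) used_c_ge0 => E Ek_ge0 E_ge0 hp_le'.
have [same_min | moved] := eqVneq (min_word c') (min_word c).
  have used_le : E * (#|used_words c'|.-1)%:R <= E * (#|used_words c|.-1)%:R.
    rewrite ler_wpM2l // ler_nat -!subn1 leq_sub2r //.
    exact/subset_leq_card/used_words_update.
  suff : n%:R * harmonic_potential c' <= n%:R * harmonic_potential c - drop by lra.
  have -> : drop = n%:R * (if u \in peak c then #|peak c|%:R^-1 else 0).
    by rewrite /drop; case: ifP; rewrite ?mulr0.
  by rewrite -mulrBr ler_wpM2l ?harmonic_potential_update.
have used_lt : E * (#|used_words c'|.-1)%:R + E <= E * (#|used_words c|.-1)%:R.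
  rewrite -[X in _ + X]mulr1 -mulrDr ler_wpM2l // natr1 ler_nat prednK ?card_used_words_gt0 //.
  by rewrite -ltnS prednK ?card_used_words_gt0 ?card_used_words_update.
lra.
Qed.

Lemma potential_drift c : coherent c -> ~~ is_fixed e c ->
  \sum_(u < n) potential (update e c u) <= n%:R * (potential c - 1).
Proof.
move=> coh not_fixed.
suff [A [x [drop n_le]]] : exists (A : {set 'I_n}) (x : R),
    (forall u, potential (update e c u) <= potential c - (if u \in A then x else 0))
    /\ n%:R <= x *+ #|A|.
  apply: le_trans (ler_sum _ (fun u _ => drop u)) _.
  by rewrite sumrB sumr_const card_ord -big_mkcond sumr_const mulrBr mulr1 mulr_natl lerB.
have n_le_card (A : {set 'I_n}) : A != set0 -> n%:R <= n%:R *+ #|A| :> R.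
  by rewrite -card_gt0 -mulrnA ler_nat => /leq_pmulr ->.
have [cons | no_cons] := boolP (consensus c).
  exists (dirty c), n%:R; split=> [u | ]; first by rewrite potential_update_consensus.
  by apply/n_le_card; apply: contraNneq not_fixed => /(consensus_fixed coh cons).
have [settled_c | /negPn/eqP unsettled_c] := boolP (settled c != set0).
  exists (frontier c), n%:R; split=> [u | ]; first exact: potential_update_settled.
  exact/n_le_card/frontier_neq0.
exists (peak c), (n%:R / #|peak c|%:R); split=> [u | ]; first exact: potential_update_unsettled.
by rewrite -[(_ / _) *+ _]mulr_natr divfK // pnatr_eq0 -lt0n card_gt0 peak_neq0.
Qed.
End Potential.
End Model.

Section LnBounds.
Local Open Scope ring_scope.

Lemma inv_succ_le_ln_diff (k : nat) : (0 < k)%nat ->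
  k.+1%:R^-1 <= ln k.+1%:R - ln k%:R :> R.
Proof.
rewrite -[k.+1]addn1 natrD; set x : R := k%:R => k_gt0.
have x_gt0 : 0 < x by rewrite ltr0n.
have exp_ln_ratio : exp (ln x - ln (x + 1)) = x / (x + 1).
  by rewrite exp_plus exp_Ropp !exp_ln //; apply/RltP; rewrite !RealsE; lra.
have /RleP := exp_ineq1_le (- (x + 1)^-1); rewrite !RealsE.
have -> : 1 - (x + 1)^-1 = x / (x + 1) by field; lra.
rewrite -exp_ln_ratio leNgt; apply: contraNle => lt_ln; apply/RltP/exp_increasing.
by apply/RltP; rewrite !RealsE; lra.
Qed.

Lemma harmonic_le_1_ln (k : nat) : (0 < k)%nat -> harmonic R k <= 1 + ln k%:R.
Proof.
case: k => // k _; elim: k => [|k IHk].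
  have ln1 : ln 1%:R = 0 :> R by exact: ln_1.
  by rewrite harmonicS /harmonic big_ord0 ln1; lra.
have := inv_succ_le_ln_diff (isT : (0 < k.+1)%nat).
by rewrite harmonicS; move: (k.+2%:R^-1) => i; lra.
Qed.

Lemma potential_bound_le_ln (n p : nat) : (1 < n)%nat -> (0 < p)%nat ->
  (n * n * p.+2)%:R + n%:R * (n%:R * harmonic R n) * p%:R
  <= 9 * n%:R ^+ 2 * p%:R * ln n%:R :> R.
Proof.
move=> n_gt1 p_gt0; have H_le := harmonic_le_1_ln (ltnW n_gt1).
have H_ge : 1 + 2^-1 <= harmonic R n.
  by apply: le_trans (le_harmonic R n_gt1); rewrite !harmonicS /harmonic big_ord0; lra.
move: H_le H_ge; set H := harmonic R n; set L := ln n%:R => H_le H_ge.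
have p_ge1 : 1 <= p%:R :> R by rewrite ler1n.
have HpL : H * p%:R <= (1 + L) * p%:R by rewrite ler_wpM2r ?ler0n.
have pL : p%:R * 2^-1 <= p%:R * L by rewrite ler_wpM2l ?ler0n //; lra.
have key : p%:R + 2 + H * p%:R <= 9 * (p%:R * L) by lra.
have -> : (n * n * p.+2)%:R + n%:R * (n%:R * H) * p%:R = n%:R ^+ 2 * (p%:R + 2 + H * p%:R).
  by ring.
by rewrite -mulrA -mulrA mulrCA ler_wpM2l ?exprn_ge0 ?ler0n.
Qed.

End LnBounds.

Open Scope R_scope.

Theorem theorem1 :
  exists C : R, forall (n p : nat) (e : rel 'I_n) (x0 : 'I_n -> 'I_p),
    (2 <= n)%nat ->
    simple_graph e -> connected_graph e ->
    forall N : nat,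
      sum_f_R0 (fun t => INR (not_yet_fixed_count e (init_config x0) t) / (INR n ^ t)) N
      <= C * (INR n) ^ 2 * INR p * ln (INR n).
Proof.
exists 9 => n p e x0 n_gt1 e_simple e_connected N.
have coh0 : coherent (init_config x0) by move=> v; rewrite /word /memory ffunE set11.
have := not_yet_fixed_series_le (ltnW n_gt1) (coherent_update n_gt1 e_connected)
  (fun c _ => potential_ge0 e n_gt1 R c) (potential_drift n_gt1 e_simple e_connected R) N.+1 coh0.
move=> /le_trans /(_ (potential_le n_gt1 e_connected R _)) series_le.
apply/RleP; rewrite !RealsE big_mkord /=; under eq_bigr do rewrite !RealsE.
apply: le_trans series_le _; apply: potential_bound_le_ln => //.
by case: (x0 (Ordinal (ltnW n_gt1))) => k; apply: leq_ltn_trans.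
Qed.
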